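(* For each fixed $\omega\in\Omega_0^*$, the sample path $(u,v)\mapsto\dot X(u,v,\omega)$ is a three times continuously differentiable function on $\mathbb{R}\times(1/\alpha;1)$. Consequently, for all real $M,a,b$ with $M>0$ and $1/\alpha<a<b<1$ (with the convention $0/0=0$), $$\sup_{(u_1,u_2,v_1,v_2)\in[-M;M]^2\times[a;b]^2}\left\{\frac{|\dot X(u_1,v_1,\omega)-\dot X(u_2,v_2,\omega)|}{|u_1-u_2|+|v_1-v_2|}\right\}<\infty,$$ and in particular $$\sup_{(u_1,u_2,v)\in[-M;M]^2\times[a;b]}\left\{\frac{|\dot X(u_1,v,\omega)-\dot X(u_2,v,\omega)|}{|u_1-u_2|}\right\}<\infty.$$
   Context: Fix $\alpha\in(1,2)$. Let $Z_\alpha(ds)$ be an independently scattered symmetric $\alpha$-stable random measure on $\mathbb{R}$ with Lebesgue control measure on $(\Omega,\mathcal{F},\mathbb{P})$. For $x,\kappa\in\mathbb{R}$, $(x)_+^\kappa=x^\kappa$ if $x>0$ and $0$ otherwise. Let $\psi$ be a three times continuously differentiable compactly supported Daubechies mother wavelet generating an orthonormal basis of $L^2(\mathbb{R})$. For $(x,v)\in\mathbb{R}\times(1/\alpha;1)$, $\Psi(x,v)=\int_{\mathbb{R}}(x-s)_+^{v-1/\alpha}\psi(s)\,ds$; for $(j,k)\in\mathbb{Z}^2$, $\epsilon_{j,k}=2^{j/\alpha}\int_{\mathbb{R}}\psi(2^js-k)Z_\alpha(ds)$. $\Omega_0^*$ is an event of probability $1$ such that for every $\eta>0$ there is a positive finite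 random variable $C_\eta$ with $|\epsilon_{j,k}(\omega)|\le C_\eta(\omega)(3+|j|)^{1/\alpha+\eta}(3+|k|)^{1/\alpha+\eta}$ for all $\omega\in\Omega_0^*$, $(j,k)\in\mathbb{Z}^2$ (such an event exists). The low frequency part $\dot X$ is defined on $\Omega_0^*$, for $(u,v)\in\mathbb{R}\times(1/\alpha;1)$, by $\dot X(u,v)=\sum_{j=1}^{\infty}\sum_{k\in\mathbb{Z}}2^{jv}\epsilon_{-j,k}\big(\Psi(2^{-j}u-k,v)-\Psi(-k,v)\big)$ (this series converges on $\Omega_0^*$ uniformly on compact subsets of $\mathbb{R}\times(1/\alpha;1)$). One may use that all partial derivatives $\partial_x^p\partial_v^q\Psi$, $p\in\{0,1,2,3\}$, $q\in\mathbb{Z}_+$, exist, are continuous and satisfy $\sup_{(x,v)\in\mathbb{R}\times[a;b]}(3+|x|)^2|\partial_x^p\partial_v^q\Psi(x,v)|<\infty$ for every compact $[a;b]\subset(1/\alpha;1)$. *)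

From Stdlib Require Export Reals Lra ZArith Classical ClassicalEpsilon.
Open Scope R_scope.

(** Total Riemann integral: value of [RiemannInt] if [f] is Riemann
    integrable on [a,b], and 0 otherwise (the value is independent of the
    integrability proof, cf. RiemannInt_P5). *)
Definition RInt (f : R -> R) (a b : R) : R :=
  match excluded_middle_informative (exists pr : Riemann_integrable f a b, True) with
  | left H => RiemannInt (proj1_sig (constructive_indefinite_description _ H))
  | right _ => 0
  end.

Definition lim_seq (u : nat -> R) : R :=
  match excluded_middle_informative (exists l, Un_cv u l) with
  | left H => proj1_sig (constructive_indefinite_description _ H)
  | right _ => 0
  end.

Definition RealLineInt (f : R -> R) : R :=
  lim_seq (fun n => RInt f (- INR n) (INR n)).

Definition pospow (x kappa : R) : R :=
  if Rlt_dec 0 x then Rpower x kappa else 0.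

Definition Psi (alpha : R) (psi : R -> R) (x v : R) : R :=
  RealLineInt (fun s => pospow (x - s) (v - 1 / alpha) * psi s).

(** Sum over k in Z, as the limit of symmetric partial sums over |k| <= N. *)
Definition sumZ (f : Z -> R) : R :=
  lim_seq (fun N => sum_f_R0 (fun i => f (Z.of_nat i - Z.of_nat N)%Z) (2 * N)).

Definition sumN1 (f : nat -> R) : R :=
  lim_seq (fun J => sum_f_R0 (fun i => f (S i)) J).

Definition Xdot (alpha : R) (psi : R -> R) (eps : Z -> Z -> R) (u v : R) : R :=
  sumN1 (fun j =>
    sumZ (fun k =>
      Rpower 2 (INR j * v) * eps (- Z.of_nat j)%Z k *
      (Psi alpha psi (/ 2 ^ j * u - IZR k) v - Psi alpha psi (- IZR k) v))).

Definition in_dom (alpha v : R) : Prop := 1 / alpha < v < 1.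

Definition cont_dom (alpha : R) (f : R -> R -> R) (u v : R) : Prop :=
  forall e, 0 < e -> exists d, 0 < d /\
    forall u' v', in_dom alpha v' -> Rabs (u' - u) < d -> Rabs (v' - v) < d ->
      Rabs (f u' v' - f u v) < e.

Definition C3_dom (alpha : R) (f : R -> R -> R) : Prop :=
  exists D : nat -> nat -> R -> R -> R,
    (forall u v, in_dom alpha v -> D 0%nat 0%nat u v = f u v) /\
    (forall p q u v, (p + q < 3)%nat -> in_dom alpha v ->
        derivable_pt_lim (fun x => D p q x v) u (D (S p) q u v)) /\
    (forall p q u v, (p + q < 3)%nat -> in_dom alpha v ->
        derivable_pt_lim (fun y => D p q u y) v (D p (S q) u v)) /\
    (forall p q u v, (p + q <= 3)%nat -> in_dom alpha v -> cont_dom alpha (D p q) u v).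

Definition qdiv (x y : R) : R := if Req_EM_T y 0 then 0 else x / y.

(* On a box [-M, M] x [a, b] with [1/alpha < a <= b < 1], the derivatives [d_u^p d_v^q]
   ([p + q <= 3]) of the [(j, k)] term of the series defining [Xdot] are bounded by [c_j d_k],
   where [c_j ~ j^4 2^((b - 1) j)] and [d_k = (3 + |k|)^(beta - 2)], [beta = (1 + 1/alpha) / 2 < 1]:
   the coefficients grow like [(3 + |j|)^beta (3 + |k|)^beta], the dilation by [2^-j] in the
   argument of [Psi] gains a factor [2^-j] (through the mean value theorem when [p = 0]), and the
   derivatives of [Psi] decay like [(3 + |x|)^-2]. Both sequences are summable, so by the
   Weierstrass M-test the series of derivatives converge locally uniformly; differentiating term by
   term gives a [C^3] sample path whose first derivatives are bounded on every box, and the mean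
   value theorem turns these bounds into the Lipschitz estimates. *)

From Stdlib Require Import Reals ZArith Lra Lia.
From Coquelicot Require Import Coquelicot.
Open Scope R_scope.

Section Dominated.
Variables (f w : nat -> R).
Hypothesis Hfw : forall n, Rabs (f n) <= w n.
Hypothesis Hw : ex_series w.

Lemma ex_series_Rabs_dominated : ex_series (fun n => Rabs (f n)).
Proof.
  apply (ex_series_le (fun n => Rabs (f n)) w); auto.
  intros n. change norm with Rabs. rewrite Rabs_Rabsolu. auto.
Qed.

Lemma ex_series_dominated : ex_series f.
Proof. apply ex_series_Rabs, ex_series_Rabs_dominated. Qed.

Lemma Series_Rabs_le_dominated : Rabs (Series f) <= Series w.
Proof.
  eapply Rle_trans; [apply Series_Rabs, ex_series_Rabs_dominated|].
  apply Series_le; auto. intros n; split; [apply Rabs_pos | auto].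
Qed.
End Dominated.

Lemma Un_cv_Series (f : nat -> R) : ex_series f -> Un_cv (fun N => sum_f_R0 f N) (Series f).
Proof. intros H. apply is_series_Reals, Series_correct, H. Qed.

Lemma Series_tail_dominated (f w : nat -> R) N :
  (forall n, Rabs (f n) <= w n) -> ex_series w ->
  Rabs (Series f - sum_f_R0 f N) <= Series w - sum_f_R0 w N.
Proof.
  intros Hfw Hw.
  rewrite (Series_incr_n f (S N)), (Series_incr_n w (S N)); try lia; auto;
    [| apply (ex_series_dominated f w); auto].
  simpl pred. ring_simplify (sum_f_R0 f N + Series (fun k => f (S N + k)%nat) - sum_f_R0 f N).
  ring_simplify (sum_f_R0 w N + Series (fun k => w (S N + k)%nat) - sum_f_R0 w N).
  apply Series_Rabs_le_dominated; auto. apply ex_series_incr_n; auto.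
Qed.

Lemma Series_tail_small (w : nat -> R) : ex_series w ->
  forall e, 0 < e -> exists N0, forall N, (N0 <= N)%nat -> Series w - sum_f_R0 w N < e.
Proof.
  intros Hw e He. destruct (Un_cv_Series w Hw e He) as [N0 HN]. exists N0. intros N HN'.
  specialize (HN N HN'). unfold R_dist in HN. rewrite Rabs_minus_sym in HN.
  pose proof (Rle_abs (Series w - sum_f_R0 w N)). lra.
Qed.

Lemma derivable_pt_lim_Series (g g' : nat -> R -> R) (w : nat -> R) x (d : posreal) :
  ex_series w ->
  (forall n y, Rabs (y - x) < d -> Rabs (g n y) <= w n /\ Rabs (g' n y) <= w n) ->
  (forall n y, Rabs (y - x) < d -> derivable_pt_lim (g n) y (g' n y)) ->
  derivable_pt_lim (fun y => Series (fun n => g n y)) x (Series (fun n => g' n x)).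
Proof.
  intros Hw Hgw Hd.
  apply (CVU_derivable (fun N y => sum_f_R0 (fun n => g n y) N)
           (fun N y => sum_f_R0 (fun n => g' n y) N) _ (fun y => Series (fun n => g' n y)) x d).
  - intros e He. destruct (Series_tail_small w Hw e He) as [N0 HN0]. exists N0.
    intros N y HN Hy. eapply Rle_lt_trans; [apply Series_tail_dominated|apply HN0]; auto.
    intros n; apply Hgw; auto.
  - intros y Hy. apply Un_cv_Series, (ex_series_dominated _ w); auto. intros n; apply Hgw; auto.
  - intros N y Hy. induction N; simpl; [apply Hd; auto|].
    apply derivable_pt_lim_plus; auto.
  - unfold Boule. rewrite Rminus_eq_0, Rabs_R0. apply cond_pos.
Qed.

Section ContDom.
Variable alpha : R.

Definition dom_nbhs (u v : R) : (R * R -> Prop) -> Prop :=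
  within (fun z : R * R => in_dom alpha (snd z)) (locally (u, v)).

Lemma cont_dom_filterlim f u v :
  cont_dom alpha f u v <->
  filterlim (fun z => f (fst z) (snd z)) (dom_nbhs u v) (locally (f u v)).
Proof.
  split.
  - intros Hf P [e HP]. destruct (Hf e (cond_pos e)) as [d [Hd Hfd]].
    exists (mkposreal d Hd). intros [u' v'] [Hu Hv] Hdom. apply HP, Hfd; auto.
  - intros Hf e He. destruct (Hf _ (locally_ball (f u v) (mkposreal e He))) as [d Hd].
    exists d; split; [apply cond_pos|]. intros u' v' Hdom Hu Hv.
    exact (Hd (u', v') (conj Hu Hv) Hdom).
Qed.

Lemma cont_dom_const c u v : cont_dom alpha (fun _ _ => c) u v.
Proof. apply cont_dom_filterlim, filterlim_const. Qed.

Lemma cont_dom_plus f g u v : cont_dom alpha f u v -> cont_dom alpha g u v ->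
  cont_dom alpha (fun x y => f x y + g x y) u v.
Proof.
  rewrite !cont_dom_filterlim; intros Hf Hg.
  eapply filterlim_comp_2; [exact Hf | exact Hg | apply (filterlim_plus (V := R_NormedModule))].
Qed.

Lemma cont_dom_opp f u v : cont_dom alpha f u v -> cont_dom alpha (fun x y => - f x y) u v.
Proof.
  rewrite !cont_dom_filterlim; intros Hf.
  eapply filterlim_comp; [exact Hf | apply (filterlim_opp (V := R_NormedModule))].
Qed.

Lemma cont_dom_minus f g u v : cont_dom alpha f u v -> cont_dom alpha g u v ->
  cont_dom alpha (fun x y => f x y - g x y) u v.
Proof. intros Hf Hg. exact (cont_dom_plus _ _ _ _ Hf (cont_dom_opp _ _ _ Hg)). Qed.

Lemma cont_dom_mult f g u v : cont_dom alpha f u v -> cont_dom alpha g u v ->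
  cont_dom alpha (fun x y => f x y * g x y) u v.
Proof.
  rewrite !cont_dom_filterlim; intros Hf Hg.
  eapply filterlim_comp_2; [exact Hf | exact Hg | apply (filterlim_mult (K := R_AbsRing))].
Qed.

Lemma cont_dom_scal c f u v : cont_dom alpha f u v -> cont_dom alpha (fun x y => c * f x y) u v.
Proof. apply (cont_dom_mult (fun _ _ => c)), cont_dom_const. Qed.

Lemma cont_dom_comp_l (F : R -> R -> R) (phi : R -> R) u v :
  continuity_pt phi u -> cont_dom alpha F (phi u) v ->
  cont_dom alpha (fun x y => F (phi x) y) u v.
Proof.
  intros Hphi HF e He. destruct (HF e He) as [d [Hd HFd]].
  apply continuity_pt_filterlim in Hphi.
  destruct (Hphi _ (locally_ball (phi u) (mkposreal d Hd))) as [d' Hd'].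
  exists (Rmin d d'); split; [apply Rmin_pos; [lra | apply cond_pos]|].
  intros u' v' Hdom Hu Hv. apply HFd; [exact Hdom | | ].
  - apply (Hd' u'). exact (Rlt_le_trans _ _ _ Hu (Rmin_r _ _)).
  - exact (Rlt_le_trans _ _ _ Hv (Rmin_l _ _)).
Qed.

Lemma cont_dom_of_continuity_r (h : R -> R) u v :
  continuity_pt h v -> cont_dom alpha (fun _ y => h y) u v.
Proof.
  intros Hh e He. apply continuity_pt_filterlim in Hh.
  destruct (Hh _ (locally_ball (h v) (mkposreal e He))) as [d Hd].
  exists d; split; [apply cond_pos|]. intros u' v' _ _ Hv. exact (Hd v' Hv).
Qed.

Lemma cont_dom_sum (g : nat -> R -> R -> R) u v N :
  (forall n, cont_dom alpha (g n) u v) ->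
  cont_dom alpha (fun x y => sum_f_R0 (fun n => g n x y) N) u v.
Proof. intros H; induction N; simpl; [apply H | apply cont_dom_plus; auto]. Qed.

Lemma cont_dom_Series (g : nat -> R -> R -> R) (w : nat -> R) u0 v0 (d : posreal) :
  ex_series w ->
  (forall n u v, Rabs (u - u0) < d -> Rabs (v - v0) < d -> Rabs (g n u v) <= w n) ->
  (forall n, cont_dom alpha (g n) u0 v0) ->
  cont_dom alpha (fun u v => Series (fun n => g n u v)) u0 v0.
Proof.
  intros Hw Hgw Hc e He.
  destruct (Series_tail_small w Hw (e / 3)) as [N HN]; [lra|].
  assert (Htail : forall u v, Rabs (u - u0) < d -> Rabs (v - v0) < d ->
      Rabs (Series (fun n => g n u v) - sum_f_R0 (fun n => g n u v) N) < e / 3).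
  { intros u v Hu Hv. eapply Rle_lt_trans; [apply Series_tail_dominated|apply HN]; auto. }
  destruct (cont_dom_sum g u0 v0 N Hc (e / 3)) as [d1 [Hd1 Hsum]]; [lra|].
  exists (Rmin d d1); split; [apply Rmin_pos; [apply cond_pos | lra]|].
  intros u v Hdom Hu Hv.
  assert (Hself : forall x, Rabs (x - x) < d)
    by (intros; rewrite Rminus_eq_0, Rabs_R0; apply cond_pos).
  assert (T1 := Htail u v (Rlt_le_trans _ _ _ Hu (Rmin_l _ _))
                        (Rlt_le_trans _ _ _ Hv (Rmin_l _ _))).
  assert (T2 := Htail u0 v0 (Hself u0) (Hself v0)).
  assert (T3 := Hsum u v Hdom (Rlt_le_trans _ _ _ Hu (Rmin_r _ _))
                            (Rlt_le_trans _ _ _ Hv (Rmin_r _ _))).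
  simpl in T3.
  set (s := Series (fun n => g n u v)) in *. set (s0 := Series (fun n => g n u0 v0)) in *.
  set (P := sum_f_R0 (fun n => g n u v) N) in *. set (P0 := sum_f_R0 (fun n => g n u0 v0) N) in *.
  apply Rabs_def2 in T1, T2, T3. apply Rabs_def1; lra.
Qed.

End ContDom.

Definition is_C3_jet (alpha : R) (F : nat -> nat -> R -> R -> R) : Prop :=
  (forall p q u v, (p + q < 3)%nat -> in_dom alpha v ->
     derivable_pt_lim (fun x => F p q x v) u (F (S p) q u v)) /\
  (forall p q u v, (p + q < 3)%nat -> in_dom alpha v ->
     derivable_pt_lim (fun y => F p q u y) v (F p (S q) u v)) /\
  (forall p q u v, (p + q <= 3)%nat -> in_dom alpha v -> cont_dom alpha (F p q) u v).

Definition jet_bounded (F : nat -> nat -> R -> R -> R) (M a b B : R) : Prop :=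
  forall p q u v, (p + q <= 3)%nat -> Rabs u <= M -> a <= v <= b -> Rabs (F p q u v) <= B.

Definition dom_box (alpha M a b : R) : Prop := 0 < M /\ 1 / alpha < a /\ a <= b /\ b < 1.

Lemma dom_box_nbhs alpha u0 v0 : in_dom alpha v0 ->
  exists M a b (d : posreal), dom_box alpha M a b /\
    forall u v, Rabs (u - u0) < d -> Rabs (v - v0) < d -> Rabs u <= M /\ a <= v <= b.
Proof.
  unfold in_dom; intros [H1 H2].
  set (d := Rmin 1 (Rmin ((v0 - 1 / alpha) / 2) ((1 - v0) / 2))).
  assert (Hd : 0 < d) by (repeat apply Rmin_pos; lra).
  exists (Rabs u0 + 1), ((1 / alpha + v0) / 2), ((v0 + 1) / 2), (mkposreal d Hd); simpl.
  split; [unfold dom_box; pose proof (Rabs_pos u0); repeat split; lra|].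
  assert (d <= 1) by apply Rmin_l.
  assert (d <= (v0 - 1 / alpha) / 2) by (eapply Rle_trans; [apply Rmin_r | apply Rmin_l]).
  assert (d <= (1 - v0) / 2) by (eapply Rle_trans; [apply Rmin_r | apply Rmin_r]).
  pose proof (Rle_abs u0). pose proof (Rle_abs (- u0)) as Hn. rewrite Rabs_Ropp in Hn.
  intros u v Hu Hv. apply Rabs_def2 in Hu, Hv. split; [|lra].
  apply Rabs_le; lra.
Qed.

Section SeriesJet.
Variable alpha : R.
Variable f : nat -> nat -> nat -> R -> R -> R.
Hypothesis Hjet : forall n, is_C3_jet alpha (f n).
Hypothesis Hdom : forall M a b, dom_box alpha M a b ->
  exists w, ex_series w /\ forall n, jet_bounded (f n) M a b (w n).

Definition Series_jet (p q : nat) (u v : R) : R := Series (fun n => f n p q u v).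

Lemma Series_jet_bounded M a b w : ex_series w ->
  (forall n, jet_bounded (f n) M a b (w n)) -> jet_bounded Series_jet M a b (Series w).
Proof.
  intros Hw Hb p q u v Hpq Hu Hv. apply Series_Rabs_le_dominated; auto.
  intros n; apply Hb; auto.
Qed.

Lemma locally_dominated u0 v0 : in_dom alpha v0 ->
  exists (d : posreal) (w : nat -> R), ex_series w /\
    forall u v, Rabs (u - u0) < d -> Rabs (v - v0) < d ->
      in_dom alpha v /\ forall n p q, (p + q <= 3)%nat -> Rabs (f n p q u v) <= w n.
Proof.
  intros Hv0. destruct (dom_box_nbhs alpha u0 v0 Hv0) as [M [a [b [d [Hbox Hnb]]]]].
  destruct (Hdom M a b Hbox) as [w [Hw Hb]].
  exists d, w; split; auto. intros u v Hu Hv. destruct (Hnb u v Hu Hv) as [HuM Hvab].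
  destruct Hbox as [_ [Ha [_ Hb1]]]. split; [unfold in_dom; lra|].
  intros n p q Hpq. apply Hb; auto.
Qed.

Lemma Series_jet_C3 : is_C3_jet alpha Series_jet.
Proof.
  assert (Hself : forall (d : posreal) x, Rabs (x - x) < d)
    by (intros; rewrite Rminus_eq_0, Rabs_R0; apply cond_pos).
  split; [|split]; intros p q u0 v0 Hpq Hv0;
    destruct (locally_dominated u0 v0 Hv0) as [d [w [Hw Hloc]]].
  - apply (derivable_pt_lim_Series (fun n x => f n p q x v0) (fun n x => f n (S p) q x v0)
             w u0 d Hw).
    + intros n y Hy. destruct (Hloc y v0 Hy (Hself d v0)) as [_ B]; split; apply B; lia.
    + intros n y Hy. apply (Hjet n); [lia | apply (Hloc y v0 Hy (Hself d v0))].
  - apply (derivable_pt_lim_Series (fun n y => f n p q u0 y) (fun n y => f n p (S q) u0 y)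
             w v0 d Hw).
    + intros n y Hy. destruct (Hloc u0 y (Hself d u0) Hy) as [_ B]; split; apply B; lia.
    + intros n y Hy. apply (Hjet n); [lia | apply (Hloc u0 y (Hself d u0) Hy)].
  - apply (cont_dom_Series alpha (fun n => f n p q) w u0 v0 d Hw).
    + intros n u v Hu Hv. apply (Hloc u v Hu Hv); auto.
    + intros n. apply (Hjet n); auto.
Qed.
End SeriesJet.

Section DoubleSeriesJet.
Variable alpha : R.
Variable t : nat -> nat -> nat -> nat -> R -> R -> R.
Hypothesis Hjet : forall j n, is_C3_jet alpha (t j n).
Hypothesis Hdom : forall M a b, dom_box alpha M a b ->
  exists c d : nat -> R, ex_series c /\ ex_series d /\
    forall j n, jet_bounded (t j n) M a b (c j * d n).

Lemma inner_Series_jet_dominated M a b : dom_box alpha M a b ->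
  exists c d : nat -> R, ex_series c /\ ex_series d /\
    forall j, jet_bounded (Series_jet (t j)) M a b (c j * Series d).
Proof.
  intros Hbox. destruct (Hdom M a b Hbox) as [c [d [Hc [Hd Hb]]]].
  exists c, d; repeat split; auto. intros j. rewrite <- Series_scal_l.
  apply Series_jet_bounded; [apply (ex_series_scal_l (c j) d); auto | apply Hb].
Qed.

Definition double_Series_jet := Series_jet (fun j => Series_jet (t j)).

Lemma double_Series_jet_C3 : is_C3_jet alpha double_Series_jet.
Proof.
  apply Series_jet_C3.
  - intros j. apply Series_jet_C3; auto. intros M a b Hbox.
    destruct (Hdom M a b Hbox) as [c [d [Hc [Hd Hb]]]].
    exists (fun n => c j * d n); split; [apply (ex_series_scal_l (c j) d); auto | apply Hb].
  - intros M a b Hbox. destruct (inner_Series_jet_dominated M a b Hbox) as [c [d [Hc [Hd Hb]]]].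
    exists (fun j => c j * Series d).
    split; [apply (ex_series_scal_r (Series d) c); auto | apply Hb].
Qed.

Lemma double_Series_jet_bounded M a b : dom_box alpha M a b ->
  exists B, jet_bounded double_Series_jet M a b B.
Proof.
  intros Hbox. destruct (inner_Series_jet_dominated M a b Hbox) as [c [d [Hc [Hd Hb]]]].
  exists (Series (fun j => c j * Series d)). apply Series_jet_bounded; auto.
  apply (ex_series_scal_r (Series d) c); auto.
Qed.

Lemma double_Series_jet_summable u v : in_dom alpha v ->
  (forall j, ex_series (fun n => t j n 0 0 u v)) /\
  ex_series (fun j => Series_jet (t j) 0 0 u v).
Proof.
  intros Hv. destruct (dom_box_nbhs alpha u v Hv) as [M [a [b [d [Hbox Hnb]]]]].
  destruct (Hnb u v) as [Hu Hvab]; try (rewrite Rminus_eq_0, Rabs_R0; apply cond_pos).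
  split.
  - intros j. destruct (Hdom M a b Hbox) as [c [dd [Hc [Hd Hb]]]].
    apply (ex_series_dominated _ (fun n => c j * dd n)); [intros n; apply Hb; auto|].
    apply (ex_series_scal_l (c j) dd); auto.
  - destruct (inner_Series_jet_dominated M a b Hbox) as [c [dd [Hc [Hd Hb]]]].
    apply (ex_series_dominated _ (fun j => c j * Series dd)); [intros j; apply Hb; auto|].
    apply (ex_series_scal_r (Series dd) c); auto.
Qed.
End DoubleSeriesJet.

Lemma C3_jet_plus alpha F G : is_C3_jet alpha F -> is_C3_jet alpha G ->
  is_C3_jet alpha (fun p q u v => F p q u v + G p q u v).
Proof.
  intros [F1 [F2 F3]] [G1 [G2 G3]].
  split; [|split]; intros p q u v Hpq Hv.
  - apply derivable_pt_lim_plus; auto.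
  - apply derivable_pt_lim_plus; auto.
  - apply cont_dom_plus; auto.
Qed.

(* [leibniz_exp L G q = \sum_(i <= q) C(q,i) L^(q-i) G i]: for [G i = g^(i)(v)] this is
   [e^(-L v)] times the [q]-th derivative of [v |-> e^(L v) g(v)]. *)
Fixpoint leibniz_exp (L : R) (G : nat -> R) (q : nat) : R :=
  match q with
  | O => G O
  | S q' => L * leibniz_exp L G q' + leibniz_exp L (fun i => G (S i)) q'
  end.

Lemma derivable_pt_lim_leibniz_exp L (G : R -> nat -> R) (G' : nat -> R) x q :
  (forall i, derivable_pt_lim (fun y => G y i) x (G' i)) ->
  derivable_pt_lim (fun y => leibniz_exp L (G y) q) x (leibniz_exp L G' q).
Proof.
  revert G G'; induction q as [|q IH]; intros G G' HG; simpl; [apply HG|].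
  apply derivable_pt_lim_plus; [apply (derivable_pt_lim_scal (fun y => leibniz_exp L (G y) q)) |];
    apply IH; auto.
Qed.

Lemma cont_dom_leibniz_exp alpha L (G : R -> R -> nat -> R) u v q :
  (forall i, cont_dom alpha (fun x y => G x y i) u v) ->
  cont_dom alpha (fun x y => leibniz_exp L (G x y) q) u v.
Proof.
  revert G; induction q as [|q IH]; intros G HG; simpl; [apply HG|].
  apply cont_dom_plus; [apply (cont_dom_scal alpha L (fun x y => leibniz_exp L (G x y) q)) |];
    apply IH; auto.
Qed.

Lemma Rabs_leibniz_exp_le L (G : nat -> R) m q : 0 <= L ->
  (forall i, (i <= q)%nat -> Rabs (G i) <= m) -> Rabs (leibniz_exp L G q) <= (1 + L) ^ q * m.
Proof.
  revert G; induction q as [|q IH]; intros G HL HG; simpl; [rewrite Rmult_1_l; auto|].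
  assert (H1 := IH G HL ltac:(intros i Hi; apply HG; lia)).
  assert (H2 := IH (fun i => G (S i)) HL ltac:(intros i Hi; apply HG; lia)).
  eapply Rle_trans; [apply Rabs_triang|]. rewrite Rabs_mult, (Rabs_pos_eq L HL).
  assert (L * Rabs (leibniz_exp L G q) <= L * ((1 + L) ^ q * m)) by (apply Rmult_le_compat_l; auto).
  lra.
Qed.

Lemma derivable_pt_lim_affine_comp (F : R -> R) c s u l :
  derivable_pt_lim F (c * u - s) l -> derivable_pt_lim (fun x => F (c * x - s)) u (l * c).
Proof.
  intros H. apply (derivable_pt_lim_comp (fun x => c * x - s) F); auto.
  apply is_derive_Reals. auto_derive; auto; ring.
Qed.

Lemma derivable_pt_lim_Rpower2 j v :
  derivable_pt_lim (fun y => Rpower 2 (j * y)) v (j * ln 2 * Rpower 2 (j * v)).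
Proof. apply is_derive_Reals. unfold Rpower. auto_derive; auto; ring. Qed.

Definition pairZ (F : Z -> R) (n : nat) : R :=
  match n with
  | O => F 0%Z
  | S m => F (Z.of_nat (S m)) + F (- Z.of_nat (S m))%Z
  end.

Section XdotTerms.
Variable alpha : R.
Variable DP : nat -> nat -> R -> R -> R.
Variable eps : Z -> Z -> R.
Hypothesis HDu : forall p q x v, (p < 3)%nat -> in_dom alpha v ->
  derivable_pt_lim (fun y => DP p q y v) x (DP (S p) q x v).
Hypothesis HDv : forall p q x v, (p <= 3)%nat -> in_dom alpha v ->
  derivable_pt_lim (fun w => DP p q x w) v (DP p (S q) x v).
Hypothesis HDc : forall p q x v, (p <= 3)%nat -> in_dom alpha v -> cont_dom alpha (DP p q) x v.

(* [d_u^p d_v^r] of [(u, v) |-> Psi (2^-j u - k, v) - Psi (- k, v)]. *)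
Definition Psi_incr_jet (j : nat) (k : Z) (p r : nat) (u v : R) : R :=
  match p with
  | O => DP 0 r (/ 2 ^ j * u - IZR k) v - DP 0 r (- IZR k) v
  | _ => (/ 2 ^ j) ^ p * DP p r (/ 2 ^ j * u - IZR k) v
  end.

Definition Xdot_term_jet (j : nat) (k : Z) (p q : nat) (u v : R) : R :=
  eps (- Z.of_nat j)%Z k *
  (Rpower 2 (INR j * v) * leibniz_exp (INR j * ln 2) (fun r => Psi_incr_jet j k p r u v) q).

Lemma Psi_incr_jet_du j k p r u v : (p < 3)%nat -> in_dom alpha v ->
  derivable_pt_lim (fun x => Psi_incr_jet j k p r x v) u (Psi_incr_jet j k (S p) r u v).
Proof.
  intros Hp Hv. destruct p as [|p]; cbv beta iota delta [Psi_incr_jet].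
  - replace ((/ 2 ^ j) ^ 1 * DP 1%nat r (/ 2 ^ j * u - IZR k) v)
      with (DP 1%nat r (/ 2 ^ j * u - IZR k) v * / 2 ^ j - 0) by ring.
    apply derivable_pt_lim_minus; [|apply derivable_pt_lim_const].
    apply (derivable_pt_lim_affine_comp (fun y => DP 0 r y v)), HDu; auto.
  - replace ((/ 2 ^ j) ^ S (S p) * DP (S (S p)) r (/ 2 ^ j * u - IZR k) v)
      with ((/ 2 ^ j) ^ S p * (DP (S (S p)) r (/ 2 ^ j * u - IZR k) v * / 2 ^ j)) by (simpl; ring).
    apply (derivable_pt_lim_scal (fun x => DP (S p) r (/ 2 ^ j * x - IZR k) v)).
    apply (derivable_pt_lim_affine_comp (fun y => DP (S p) r y v)), HDu; auto.
Qed.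

Lemma Psi_incr_jet_dv j k p r u v : (p <= 3)%nat -> in_dom alpha v ->
  derivable_pt_lim (fun y => Psi_incr_jet j k p r u y) v (Psi_incr_jet j k p (S r) u v).
Proof.
  intros Hp Hv. destruct p as [|p]; simpl.
  - apply derivable_pt_lim_minus; apply HDv; auto.
  - apply (derivable_pt_lim_scal (fun y => DP (S p) r _ y)), HDv; auto.
Qed.

Lemma Psi_incr_jet_cont j k p r u v : (p <= 3)%nat -> in_dom alpha v ->
  cont_dom alpha (Psi_incr_jet j k p r) u v.
Proof.
  intros Hp Hv.
  assert (Hcomp : cont_dom alpha (fun x y => DP p r (/ 2 ^ j * x - IZR k) y) u v).
  { apply (cont_dom_comp_l alpha (DP p r) (fun x => / 2 ^ j * x - IZR k)); [|apply HDc; auto].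
    apply derivable_continuous_pt. exists (1 * / 2 ^ j).
    apply (derivable_pt_lim_affine_comp id), derivable_pt_lim_id. }
  destruct p as [|p]; simpl.
  - apply cont_dom_minus; auto.
    apply (cont_dom_comp_l alpha (DP 0 r) (fun _ => - IZR k)); [apply continuity_pt_const|].
    + intros x y; reflexivity.
    + apply HDc; auto.
  - apply cont_dom_scal; auto.
Qed.

Lemma Xdot_term_jet_C3 j k : is_C3_jet alpha (Xdot_term_jet j k).
Proof.
  unfold Xdot_term_jet. split; [|split]; intros p q u v Hpq Hv.
  - apply (derivable_pt_lim_scal
             (fun x => Rpower 2 (INR j * v) * leibniz_exp _ (fun r => Psi_incr_jet j k p r x v) q)).
    apply (derivable_pt_lim_scal (fun x => leibniz_exp _ (fun r => Psi_incr_jet j k p r x v) q)).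
    apply derivable_pt_lim_leibniz_exp. intros i. apply Psi_incr_jet_du; auto; lia.
  - set (L := INR j * ln 2). simpl leibniz_exp.
    set (W := leibniz_exp L (fun r => Psi_incr_jet j k p r u v) q).
    set (W' := leibniz_exp L (fun r => Psi_incr_jet j k p (S r) u v) q).
    replace (Rpower 2 (INR j * v) * (L * W + W'))
      with (L * Rpower 2 (INR j * v) * W + Rpower 2 (INR j * v) * W') by ring.
    apply (derivable_pt_lim_scal
             (fun y => Rpower 2 (INR j * y) * leibniz_exp L (fun r => Psi_incr_jet j k p r u y) q)).
    apply (derivable_pt_lim_mult (fun y => Rpower 2 (INR j * y))
             (fun y => leibniz_exp L (fun r => Psi_incr_jet j k p r u y) q));
      [exact (derivable_pt_lim_Rpower2 (INR j) v)|].
    apply derivable_pt_lim_leibniz_exp. intros i. apply Psi_incr_jet_dv; auto; lia.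
  - apply cont_dom_scal, cont_dom_mult; [apply cont_dom_of_continuity_r|].
    + apply derivable_continuous_pt. eexists. apply derivable_pt_lim_Rpower2.
    + apply cont_dom_leibniz_exp. intros i. apply Psi_incr_jet_cont; auto; lia.
Qed.

Definition Xdot_pair_jet (j n : nat) (p q : nat) (u v : R) : R :=
  pairZ (fun k => Xdot_term_jet j k p q u v) n.

Lemma Xdot_pair_jet_C3 j n : is_C3_jet alpha (Xdot_pair_jet j n).
Proof.
  destruct n as [|m]; unfold Xdot_pair_jet; simpl;
    [|apply C3_jet_plus]; apply Xdot_term_jet_C3.
Qed.
End XdotTerms.

Lemma decay_shift (K M d y s : R) : 0 < M -> 0 <= K -> Rabs (y + s) <= M ->
  (3 + Rabs y) ^ 2 * Rabs d <= K -> Rabs d <= K * (1 + M) ^ 2 / (3 + Rabs s) ^ 2.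
Proof.
  intros HM HK Hy Hd.
  pose proof (Rabs_pos s). pose proof (Rabs_pos y). pose proof (Rabs_pos d).
  assert (E : 3 + Rabs s <= (1 + M) * (3 + Rabs y)).
  { replace s with ((y + s) - y) by ring. pose proof (Rabs_triang (y + s) (- y)).
    rewrite Rabs_Ropp in H2. unfold Rminus. nra. }
  assert (E2 : (3 + Rabs s) ^ 2 <= (1 + M) ^ 2 * (3 + Rabs y) ^ 2).
  { rewrite <- Rpow_mult_distr. apply pow_incr. lra. }
  apply (Rmult_le_reg_r ((3 + Rabs s) ^ 2)); [apply pow_lt; lra|].
  unfold Rdiv. rewrite Rmult_assoc, Rinv_l, Rmult_1_r by (apply pow_nonzero; lra).
  assert (0 <= (1 + M) ^ 2) by (apply pow_le; lra).
  assert (Rabs d * (3 + Rabs s) ^ 2 <= Rabs d * ((1 + M) ^ 2 * (3 + Rabs y) ^ 2))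
    by (apply Rmult_le_compat_l; auto).
  nra.
Qed.

Lemma inv_pow2_bounds j : 0 < / 2 ^ j <= 1.
Proof.
  split; [apply Rinv_0_lt_compat, pow_lt; lra|].
  rewrite <- Rinv_1. apply Rinv_le_contravar; [lra | apply pow_R1_Rle; lra].
Qed.

Lemma Rpower2_mul_inv_pow2 j b : Rpower 2 (INR j * b) * / 2 ^ j = Rpower 2 (b - 1) ^ j.
Proof.
  replace (INR j * b) with ((b - 1) * INR j + INR j) by ring.
  rewrite Rpower_plus, <- Rpower_mult, !Rpower_pow by (try apply exp_pos; lra).
  field. apply pow_nonzero; lra.
Qed.

Lemma Rpower_mul_inv_sqr y beta : 0 < y -> Rpower y beta * / y ^ 2 = Rpower y (beta - 2).
Proof.
  intros Hy. unfold Rminus. rewrite Rpower_plus, Rpower_Ropp.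
  replace 2 with (INR 2) at 1 by (simpl; ring). rewrite Rpower_pow by auto. reflexivity.
Qed.

Lemma ln2_bounds : 0 < ln 2 < 1.
Proof.
  split; [rewrite <- ln_1; apply ln_increasing; lra|].
  rewrite <- (ln_exp 1). apply ln_increasing; [lra|].
  pose proof (exp_ineq1 1 ltac:(lra)); lra.
Qed.

Section XdotBounds.
Variable alpha : R.
Variable DP : nat -> nat -> R -> R -> R.
Variable eps : Z -> Z -> R.
Hypothesis HDu : forall p q x v, (p < 3)%nat -> in_dom alpha v ->
  derivable_pt_lim (fun y => DP p q y v) x (DP (S p) q x v).
Variables M a b K C beta : R.
Hypothesis HM : 0 < M.
Hypothesis Hab : 1 / alpha < a /\ b < 1.
Hypothesis HK0 : 0 <= K.
Hypothesis HK : forall p r x v, (p <= 3)%nat -> (r <= 3)%nat -> a <= v <= b ->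
  (3 + Rabs x) ^ 2 * Rabs (DP p r x v) <= K.
Hypothesis HC : 0 <= C.
Hypothesis Hbeta : 0 <= beta <= 1.
Hypothesis Heps : forall j k : Z,
  Rabs (eps j k) <= C * Rpower (3 + Rabs (IZR j)) beta * Rpower (3 + Rabs (IZR k)) beta.

Lemma Psi_incr_jet_bound j k p r u v : (p <= 3)%nat -> (r <= 3)%nat ->
  Rabs u <= M -> a <= v <= b ->
  Rabs (Psi_incr_jet DP j k p r u v) <= / 2 ^ j * (K * (1 + M) ^ 3 / (3 + Rabs (IZR k)) ^ 2).
Proof.
  intros Hp Hr Hu Hv.
  destruct (inv_pow2_bounds j) as [I0 I1].
  set (m := K * (1 + M) ^ 2 / (3 + Rabs (IZR k)) ^ 2).
  assert (Hm : 0 <= m).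
  { unfold m, Rdiv. apply Rmult_le_pos; [apply Rmult_le_pos; [lra | apply pow_le; lra]|].
    left; apply Rinv_0_lt_compat, pow_lt. pose proof (Rabs_pos (IZR k)); lra. }
  replace (K * (1 + M) ^ 3 / (3 + Rabs (IZR k)) ^ 2) with ((1 + M) * m)
    by (unfold m; field; pose proof (Rabs_pos (IZR k)); lra).
  assert (Hx : Rabs (/ 2 ^ j * u - IZR k + IZR k) <= / 2 ^ j * M).
  { replace (/ 2 ^ j * u - IZR k + IZR k) with (/ 2 ^ j * u) by ring.
    rewrite Rabs_mult, Rabs_pos_eq by lra. apply Rmult_le_compat_l; lra. }
  assert (HjM : / 2 ^ j * M <= M) by nra.
  destruct p as [|p]; simpl.
  - destruct (MVT_abs (fun y => DP 0 r y v) (fun y => DP 1 r y v) (- IZR k) (/ 2 ^ j * u - IZR k))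
      as [c [Hc Hcbet]].
    { intros c _. apply HDu; [lia | unfold in_dom; lra]. }
    rewrite Hc. replace (/ 2 ^ j * u - IZR k - - IZR k) with (/ 2 ^ j * u - IZR k + IZR k) by ring.
    assert (Hck : Rabs (c + IZR k) <= / 2 ^ j * M).
    { unfold Rmin, Rmax in Hcbet. apply Rabs_le_between in Hx. apply Rabs_le_between.
      destruct (Rle_dec (- IZR k) (/ 2 ^ j * u - IZR k)); lra. }
    assert (Hd := decay_shift K M _ c (IZR k) HM HK0 ltac:(lra) (HK 1 r c v ltac:(lia) Hr Hv)).
    fold m in Hd. pose proof (Rabs_pos (DP 1 r c v)).
    apply Rle_trans with (m * (/ 2 ^ j * M)); [apply Rmult_le_compat; auto; apply Rabs_pos|].
    nra.
  - assert (Hd := decay_shift K M _ (/ 2 ^ j * u - IZR k) (IZR k) HM HK0 ltac:(lra)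
                    (HK (S p) r _ v Hp Hr Hv)).
    fold m in Hd. rewrite Rabs_mult.
    assert (Hq : Rabs (/ 2 ^ j * (/ 2 ^ j) ^ p) <= / 2 ^ j).
    { assert (0 <= (/ 2 ^ j) ^ p) by (apply pow_le; lra).
      assert ((/ 2 ^ j) ^ p <= 1) by (rewrite <- (pow1 p); apply pow_incr; lra).
      rewrite Rabs_pos_eq by nra. nra. }
    apply Rle_trans with (/ 2 ^ j * m); [apply Rmult_le_compat; auto; apply Rabs_pos|].
    apply Rmult_le_compat_l; nra.
Qed.

Lemma Rabs_eps_le j k :
  Rabs (eps (- Z.of_nat j)%Z k) <= C * (3 + INR j) * Rpower (3 + Rabs (IZR k)) beta.
Proof.
  pose proof (pos_INR j). eapply Rle_trans; [apply Heps|].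
  rewrite opp_IZR, <- INR_IZR_INZ, Rabs_Ropp, Rabs_pos_eq by lra.
  apply Rmult_le_compat_r; [left; apply exp_pos|]. apply Rmult_le_compat_l; [lra|].
  rewrite <- (Rpower_1 (3 + INR j)) at 2 by lra. apply Rle_Rpower; lra.
Qed.

Lemma Xdot_term_jet_bound j k p q u v : (p + q <= 3)%nat -> Rabs u <= M -> a <= v <= b ->
  Rabs (Xdot_term_jet DP eps j k p q u v) <=
  C * (K * (1 + M) ^ 3) * ((3 + INR j) ^ 4 * Rpower 2 (b - 1) ^ j) *
  Rpower (3 + Rabs (IZR k)) (beta - 2).
Proof.
  intros Hpq Hu Hv. unfold Xdot_term_jet.
  pose proof (pos_INR j) as Hj. pose proof (Rabs_pos (IZR k)) as Hk.
  destruct (inv_pow2_bounds j) as [I0 _].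
  assert (HL : 0 <= INR j * ln 2 <= INR j) by (pose proof ln2_bounds; split; nra).
  set (K1 := K * (1 + M) ^ 3) in *.
  assert (HK1 : 0 <= K1) by (apply Rmult_le_pos; [lra | apply pow_le; lra]).
  assert (E1 := Rabs_eps_le j k).
  set (Pk := 3 + Rabs (IZR k)) in *.
  assert (HPk : 0 < Pk) by (unfold Pk; lra).
  assert (E2 : 0 < Rpower 2 (INR j * v) <= Rpower 2 (INR j * b)).
  { split; [apply exp_pos|]. apply Rle_Rpower; [lra | apply Rmult_le_compat_l; lra]. }
  assert (E3 : Rabs (leibniz_exp (INR j * ln 2) (fun r => Psi_incr_jet DP j k p r u v) q) <=
               (3 + INR j) ^ 3 * (/ 2 ^ j * (K1 / Pk ^ 2))).
  { assert (Hm : 0 <= / 2 ^ j * (K1 / Pk ^ 2)).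
    { apply Rmult_le_pos; [lra|]. unfold Rdiv. apply Rmult_le_pos; [lra|].
      left; apply Rinv_0_lt_compat, pow_lt; lra. }
    eapply Rle_trans; [apply Rabs_leibniz_exp_le; [lra|]|].
    - intros i Hi. apply Psi_incr_jet_bound; auto; lia.
    - apply Rmult_le_compat_r; auto.
      apply Rle_trans with ((1 + INR j * ln 2) ^ 3).
      + apply Rle_pow; [lra | lia].
      + apply pow_incr; lra. }
  rewrite Rabs_mult, Rabs_mult, (Rabs_pos_eq (Rpower 2 _)) by lra.
  eapply Rle_trans.
  { apply Rmult_le_compat;
      [apply Rabs_pos | apply Rmult_le_pos; [lra | apply Rabs_pos] | exact E1|].
    apply Rmult_le_compat; [lra | apply Rabs_pos | apply E2 | exact E3]. }
  right. rewrite <- Rpower_mul_inv_sqr, <- Rpower2_mul_inv_pow2 by lra.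
  unfold Rdiv. ring.
Qed.

Lemma Xdot_pair_jet_bound j n p q u v : (p + q <= 3)%nat -> Rabs u <= M -> a <= v <= b ->
  Rabs (Xdot_pair_jet DP eps j n p q u v) <=
  2 * (C * (K * (1 + M) ^ 3) * ((3 + INR j) ^ 4 * Rpower 2 (b - 1) ^ j)) *
  Rpower (3 + INR n) (beta - 2).
Proof.
  intros Hpq Hu Hv.
  set (c := C * (K * (1 + M) ^ 3) * ((3 + INR j) ^ 4 * Rpower 2 (b - 1) ^ j)).
  assert (Hc : 0 <= c).
  { pose proof (pos_INR j). unfold c. repeat apply Rmult_le_pos; try apply pow_le; try lra.
    left; apply exp_pos. }
  assert (Hd : 0 < Rpower (3 + INR n) (beta - 2)) by apply exp_pos.
  assert (Hterm : forall k, Rabs (IZR k) = INR n ->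
    Rabs (Xdot_term_jet DP eps j k p q u v) <= c * Rpower (3 + INR n) (beta - 2)).
  { intros k Hk. rewrite <- Hk. apply Xdot_term_jet_bound; auto. }
  destruct n as [|m]; unfold Xdot_pair_jet, pairZ.
  - assert (Rabs (Xdot_term_jet DP eps j 0 p q u v) <= c * Rpower (3 + INR 0) (beta - 2))
      by (apply Hterm; rewrite Rabs_R0; reflexivity).
    nra.
  - eapply Rle_trans; [apply Rabs_triang|].
    assert (Habs : Rabs (IZR (Z.of_nat (S m))) = INR (S m))
      by (rewrite <- INR_IZR_INZ; apply Rabs_pos_eq, pos_INR).
    pose proof (Hterm _ Habs).
    pose proof (Hterm (- Z.of_nat (S m))%Z ltac:(rewrite opp_IZR, Rabs_Ropp; exact Habs)).
    lra.
Qed.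
End XdotBounds.

Lemma ex_series_poly_geom (rho : R) : 0 < rho < 1 ->
  ex_series (fun n => (3 + INR n) ^ 4 * rho ^ n).
Proof.
  intros Hr. apply ex_series_Rabs, (ex_series_DAlembert _ rho); [lra| |].
  - intros n. pose proof (pos_INR n).
    apply Rmult_integral_contrapositive; split; apply pow_nonzero; lra.
  - apply is_lim_seq_ext with (fun n => (1 + / (3 + INR n)) ^ 4 * rho).
    + intros n. pose proof (pos_INR n). rewrite S_INR, Rabs_pos_eq.
      * simpl. field. split; [apply pow_nonzero|]; lra.
      * unfold Rdiv. apply Rmult_le_pos; [apply Rmult_le_pos; apply pow_le; lra|].
        left; apply Rinv_0_lt_compat, Rmult_lt_0_compat; apply pow_lt; lra.
    + replace (Finite rho) with (Rbar_mult ((1 + 0) ^ 4) rho) by (simpl; f_equal; ring).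
      apply is_lim_seq_mult'; [|apply is_lim_seq_const].
      apply (is_lim_seq_continuous (fun x => x ^ 4));
        [apply derivable_continuous_pt, derivable_pt_pow|].
      apply is_lim_seq_plus'; [apply is_lim_seq_const|].
      replace (Finite 0) with (Rbar_inv p_infty) by reflexivity.
      apply is_lim_seq_inv; [|discriminate].
      eapply is_lim_seq_plus; [apply is_lim_seq_const | apply is_lim_seq_INR | reflexivity].
Qed.

Lemma ex_series_nonneg_bounded (d : nat -> R) B : (forall n, 0 <= d n) ->
  (forall N, sum_f_R0 d N <= B) -> ex_series d.
Proof.
  intros H0 HB. destruct (growing_cv (fun N => sum_f_R0 d N)) as [l Hl].
  - intros n. simpl. specialize (H0 (S n)). lra.
  - exists B. intros x [N ->]. auto.
  - exists l. apply is_series_Reals, Hl.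
Qed.

Lemma ex_series_Rpower_neg (s : R) : 1 < s -> ex_series (fun n => Rpower (3 + INR n) (- s)).
Proof.
  intros Hs. set (g := fun x => Rpower x (1 - s)).
  (* comparison with the telescoping increments of an antiderivative *)
  assert (Step : forall n, Rpower (3 + INR n) (- s) <= (g (2 + INR n) - g (3 + INR n)) / (s - 1)).
  { intros n. pose proof (pos_INR n).
    destruct (MVT_cor2 g (fun x => (1 - s) * Rpower x (1 - s - 1)) (2 + INR n) (3 + INR n))
      as [c [Hc1 Hc2]]; [lra | intros c Hc; apply derivable_pt_lim_power; lra|].
    replace (1 - s - 1) with (- s) in Hc1 by ring.
    assert (Rpower (3 + INR n) (- s) <= Rpower c (- s)).
    { rewrite !Rpower_Ropp. apply Rinv_le_contravar; [apply exp_pos | apply Rle_Rpower_l; lra]. }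
    apply (Rmult_le_reg_r (s - 1)); [lra|]. unfold Rdiv. rewrite Rmult_assoc, Rinv_l by lra.
    nra. }
  apply (ex_series_nonneg_bounded _ (g 2 / (s - 1))); [intros n; left; apply exp_pos|].
  intros N. apply Rle_trans with ((g 2 - g (3 + INR N)) / (s - 1)).
  - induction N as [|N IH].
    + specialize (Step 0%nat). simpl sum_f_R0. simpl INR in *.
      replace (2 + 0) with 2 in Step by ring. exact Step.
    + rewrite tech5. specialize (Step (S N)).
      rewrite S_INR in *. replace (2 + (INR N + 1)) with (3 + INR N) in Step by ring.
      unfold Rdiv in *. lra.
  - unfold Rdiv. apply Rmult_le_compat_r; [left; apply Rinv_0_lt_compat; lra|].
    assert (0 < g (3 + INR N)) by apply exp_pos. lra.
Qed.

Lemma bound_max_finite (P : nat -> R -> Prop) N :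
  (forall n K K', P n K -> K <= K' -> P n K') ->
  (forall n, (n <= N)%nat -> exists K, P n K) ->
  exists K, 0 <= K /\ forall n, (n <= N)%nat -> P n K.
Proof.
  intros Hmono H. induction N as [|N IH].
  - destruct (H 0%nat (le_n _)) as [K HK]. exists (Rmax K 0). split; [apply Rmax_r|].
    intros n Hn. replace n with 0%nat by lia. eapply Hmono; eauto. apply Rmax_l.
  - destruct IH as [K1 [HK1 H1]]; [intros; apply H; lia|].
    destruct (H (S N) (le_n _)) as [K2 HK2].
    exists (Rmax K1 K2). split; [eapply Rle_trans; [exact HK1 | apply Rmax_l]|].
    intros n Hn. destruct (Nat.eq_dec n (S N)) as [->|Hne].
    + eapply Hmono; eauto. apply Rmax_r.
    + eapply Hmono; [apply H1; lia | apply Rmax_l].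
Qed.

Lemma lim_seq_eq u l : Un_cv u l -> lim_seq u = l.
Proof.
  intros H. unfold lim_seq. destruct excluded_middle_informative as [E|E].
  - destruct (constructive_indefinite_description _ E) as [l' Hl']. simpl.
    eapply UL_sequence; eauto.
  - exfalso; apply E; eauto.
Qed.

Lemma sum_symmetric_pairZ F N :
  sum_f_R0 (fun i => F (Z.of_nat i - Z.of_nat N)%Z) (2 * N) = sum_f_R0 (pairZ F) N.
Proof.
  induction N as [|N IH]; [reflexivity|].
  replace (2 * S N)%nat with (S (S (2 * N))) by lia.
  rewrite tech5, decomp_sum by lia.
  replace (pred (S (2 * N))) with (2 * N)%nat by lia.
  rewrite tech5, <- IH.
  replace (sum_f_R0 (fun i => F (Z.of_nat (S i) - Z.of_nat (S N))%Z) (2 * N))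
    with (sum_f_R0 (fun i => F (Z.of_nat i - Z.of_nat N)%Z) (2 * N))
    by (apply sum_eq; intros i _; f_equal; lia).
  change (pairZ F (S N)) with (F (Z.of_nat (S N)) + F (- Z.of_nat (S N))%Z).
  replace (Z.of_nat 0 - Z.of_nat (S N))%Z with (- Z.of_nat (S N))%Z by lia.
  replace (Z.of_nat (S (S (2 * N))) - Z.of_nat (S N))%Z with (Z.of_nat (S N)) by lia.
  ring.
Qed.

Lemma sumZ_eq_Series F : ex_series (pairZ F) -> sumZ F = Series (pairZ F).
Proof.
  intros H. apply lim_seq_eq, (Un_cv_ext (fun N => sum_f_R0 (pairZ F) N)).
  - intros N. symmetry. apply sum_symmetric_pairZ.
  - apply Un_cv_Series; auto.
Qed.

Lemma sumN1_eq_Series G : ex_series (fun i => G (S i)) -> sumN1 G = Series (fun i => G (S i)).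
Proof. intros H. apply lim_seq_eq, Un_cv_Series, H. Qed.

Section XdotSeries.
Variable alpha : R.
Variable DP : nat -> nat -> R -> R -> R.
Variable eps : Z -> Z -> R.
Hypothesis HDu : forall p q x v, (p < 3)%nat -> in_dom alpha v ->
  derivable_pt_lim (fun y => DP p q y v) x (DP (S p) q x v).
Hypothesis HDv : forall p q x v, (p <= 3)%nat -> in_dom alpha v ->
  derivable_pt_lim (fun w => DP p q x w) v (DP p (S q) x v).
Hypothesis HDc : forall p q x v, (p <= 3)%nat -> in_dom alpha v -> cont_dom alpha (DP p q) x v.
Hypothesis Hdecay : forall p q a b, (p <= 3)%nat -> 1 / alpha < a -> a <= b -> b < 1 ->
  exists K, forall x v, a <= v <= b -> (3 + Rabs x) ^ 2 * Rabs (DP p q x v) <= K.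
Variables C beta : R.
Hypothesis HC : 0 <= C.
Hypothesis Hbeta : 0 <= beta < 1.
Hypothesis Heps : forall j k : Z,
  Rabs (eps j k) <= C * Rpower (3 + Rabs (IZR j)) beta * Rpower (3 + Rabs (IZR k)) beta.

Lemma uniform_decay_bound a b : 1 / alpha < a -> a <= b -> b < 1 ->
  exists K, 0 <= K /\ forall p r x v, (p <= 3)%nat -> (r <= 3)%nat -> a <= v <= b ->
    (3 + Rabs x) ^ 2 * Rabs (DP p r x v) <= K.
Proof.
  intros Ha Hab Hb.
  set (P := fun (p : nat) K => forall r x v, (r <= 3)%nat -> a <= v <= b ->
              (3 + Rabs x) ^ 2 * Rabs (DP p r x v) <= K).
  destruct (bound_max_finite P 3) as [K [HK0 HK]].
  - intros n K K' H1 H2 r x v Hr Hv. eapply Rle_trans; [apply H1|]; auto.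
  - intros p Hp.
    destruct (bound_max_finite (fun r K => forall x v, a <= v <= b ->
                 (3 + Rabs x) ^ 2 * Rabs (DP p r x v) <= K) 3) as [K [_ HK]].
    + intros n K K' H1 H2 x v Hv. eapply Rle_trans; [apply H1|]; auto.
    + intros r Hr. apply Hdecay; auto.
    + exists K. intros r x v Hr Hv. apply HK; auto.
  - exists K; split; auto. intros p r x v Hp Hr Hv. apply HK; auto.
Qed.

(* [Xdot] sums over [j >= 1], hence the shift in [j]. *)
Definition Xdot_jets (j n : nat) := Xdot_pair_jet DP eps (S j) n.

Lemma Xdot_jets_dominated M a b : dom_box alpha M a b ->
  exists c d : nat -> R, ex_series c /\ ex_series d /\
    forall j n, jet_bounded (Xdot_jets j n) M a b (c j * d n).
Proof.
  intros [HM [Ha [Hab Hb]]].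
  destruct (uniform_decay_bound a b Ha Hab Hb) as [K [HK0 HK]].
  set (rho := Rpower 2 (b - 1)).
  assert (Hrho : 0 < rho < 1).
  { split; [apply exp_pos|]. apply Rlt_le_trans with (Rpower 2 0);
      [apply Rpower_lt; lra | rewrite Rpower_O; lra]. }
  exists (fun j => 2 * (C * (K * (1 + M) ^ 3) * ((3 + INR (S j)) ^ 4 * rho ^ S j))),
         (fun n => Rpower (3 + INR n) (beta - 2)).
  split; [|split].
  - apply (ex_series_ext (fun j => scal (2 * (C * (K * (1 + M) ^ 3)))
                                         ((3 + INR (S j)) ^ 4 * rho ^ S j))).
    + intros j. unfold scal; simpl. unfold mult; simpl. ring.
    + apply (ex_series_scal_l _ (fun j => (3 + INR (S j)) ^ 4 * rho ^ S j)).
      apply (ex_series_incr_1 (fun j => (3 + INR j) ^ 4 * rho ^ j)), ex_series_poly_geom; auto.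
  - apply (ex_series_ext (fun n => Rpower (3 + INR n) (- (2 - beta)))).
    + intros n. f_equal. ring.
    + apply ex_series_Rpower_neg. lra.
  - intros j n p q u v Hpq Hu Hv.
    apply (Xdot_pair_jet_bound alpha DP eps HDu M a b K C beta); auto; lra.
Qed.

Lemma Xdot_jets_C3 j n : is_C3_jet alpha (Xdot_jets j n).
Proof. apply Xdot_pair_jet_C3; auto. Qed.

Lemma Xdot_eq_double_Series_jet psi u v :
  (forall x w, in_dom alpha w -> DP 0 0 x w = Psi alpha psi x w) -> in_dom alpha v ->
  Xdot alpha psi eps u v = double_Series_jet Xdot_jets 0 0 u v.
Proof.
  intros HPsi Hv.
  destruct (double_Series_jet_summable alpha Xdot_jets Xdot_jets_dominated u v Hv)
    as [Hin Hout].
  set (F := fun (j : nat) (k : Z) => Rpower 2 (INR j * v) * eps (- Z.of_nat j)%Z k *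
              (Psi alpha psi (/ 2 ^ j * u - IZR k) v - Psi alpha psi (- IZR k) v)).
  assert (Hpair : forall j n, pairZ (F (S j)) n = Xdot_jets j n 0 0 u v).
  { intros j n.
    assert (Hterm : forall k, F (S j) k = Xdot_term_jet DP eps (S j) k 0 0 u v)
      by (intros k; unfold F, Xdot_term_jet; simpl; rewrite !HPsi by auto; ring).
    unfold Xdot_jets, Xdot_pair_jet. destruct n; simpl; rewrite ?Hterm; reflexivity. }
  assert (Hinner : forall j, sumZ (F (S j)) = Series_jet (Xdot_jets j) 0 0 u v).
  { intros j. rewrite sumZ_eq_Series; [apply Series_ext, Hpair|].
    eapply ex_series_ext; [|apply Hin]. intros n; symmetry; apply Hpair. }
  change (sumN1 (fun j => sumZ (F j)) = double_Series_jet Xdot_jets 0 0 u v).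
  rewrite sumN1_eq_Series; [apply Series_ext, Hinner|].
  eapply ex_series_ext; [|apply Hout]. intros j; symmetry; apply Hinner.
Qed.
End XdotSeries.

Lemma jet_Lipschitz alpha (F : nat -> nat -> R -> R -> R) M a b B :
  is_C3_jet alpha F -> 1 / alpha < a -> b < 1 ->
  jet_bounded F M a b B ->
  forall u1 u2 v1 v2, Rabs u1 <= M -> Rabs u2 <= M -> a <= v1 <= b -> a <= v2 <= b ->
  Rabs (F 0%nat 0%nat u1 v1 - F 0%nat 0%nat u2 v2) <= B * (Rabs (u1 - u2) + Rabs (v1 - v2)).
Proof.
  intros [Hu [Hv _]] Ha Hb HB u1 u2 v1 v2 Hu1 Hu2 Hv1 Hv2.
  destruct (MVT_abs (fun x => F 0%nat 0%nat x v1) (fun x => F 1%nat 0%nat x v1) u2 u1)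
    as [c [Hc Hcbet]].
  { intros c _. apply Hu; [lia | unfold in_dom; lra]. }
  destruct (MVT_abs (fun y => F 0%nat 0%nat u2 y) (fun y => F 0%nat 1%nat u2 y) v2 v1)
    as [e [He Hebet]].
  { intros e Hee. apply Hv; [lia|]. unfold in_dom, Rmin, Rmax in *.
    destruct (Rle_dec v2 v1); lra. }
  assert (Bc : Rabs (F 1%nat 0%nat c v1) <= B).
  { apply HB; auto. apply Rabs_le_between in Hu1, Hu2. apply Rabs_le_between.
    unfold Rmin, Rmax in Hcbet. destruct (Rle_dec u2 u1); lra. }
  assert (Be : Rabs (F 0%nat 1%nat u2 e) <= B).
  { apply HB; auto. unfold Rmin, Rmax in Hebet. destruct (Rle_dec v2 v1); lra. }
  replace (F 0%nat 0%nat u1 v1 - F 0%nat 0%nat u2 v2)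
    with ((F 0%nat 0%nat u1 v1 - F 0%nat 0%nat u2 v1) + (F 0%nat 0%nat u2 v1 - F 0%nat 0%nat u2 v2))
    by ring.
  eapply Rle_trans; [apply Rabs_triang|]. rewrite Hc, He.
  pose proof (Rabs_pos (u1 - u2)). pose proof (Rabs_pos (v1 - v2)).
  pose proof (Rabs_pos (F 1%nat 0%nat c v1)). pose proof (Rabs_pos (F 0%nat 1%nat u2 e)).
  nra.
Qed.

Lemma qdiv_le x y K : 0 <= K -> 0 <= y -> x <= K * y -> qdiv x y <= K.
Proof.
  intros HK Hy Hx. unfold qdiv. destruct Req_EM_T as [E|E]; auto.
  apply (Rmult_le_reg_r y); [lra|]. unfold Rdiv. rewrite Rmult_assoc, Rinv_l by auto. lra.
Qed.

Lemma jet_qdiv_bounded alpha (F : nat -> nat -> R -> R -> R) (f : R -> R -> R) :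
  is_C3_jet alpha F -> (forall u v, in_dom alpha v -> F 0%nat 0%nat u v = f u v) ->
  (forall M a b, dom_box alpha M a b -> exists B, jet_bounded F M a b B) ->
  forall M a b, 0 < M -> 1 / alpha < a -> a < b -> b < 1 ->
  exists K, forall u1 u2 v1 v2,
    -M <= u1 <= M -> -M <= u2 <= M -> a <= v1 <= b -> a <= v2 <= b ->
    qdiv (Rabs (f u1 v1 - f u2 v2)) (Rabs (u1 - u2) + Rabs (v1 - v2)) <= K.
Proof.
  intros Hjet Hf Hbox M a b HM Ha Hab Hb.
  destruct (Hbox M a b ltac:(repeat split; lra)) as [B HB].
  exists B. intros u1 u2 v1 v2 Hu1 Hu2 Hv1 Hv2.
  assert (Hu1' : Rabs u1 <= M) by (apply Rabs_le; lra).
  assert (Hu2' : Rabs u2 <= M) by (apply Rabs_le; lra).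
  apply qdiv_le.
  - eapply Rle_trans; [apply Rabs_pos | apply (HB 0%nat 0%nat u1 v1); auto].
  - pose proof (Rabs_pos (u1 - u2)). pose proof (Rabs_pos (v1 - v2)). lra.
  - rewrite <- !Hf by (unfold in_dom; lra). eapply jet_Lipschitz; eauto.
Qed.

Lemma Xdot_jet_representation alpha psi eps (DP : nat -> nat -> R -> R -> R) : 1 < alpha ->
  (forall x v, in_dom alpha v -> DP 0%nat 0%nat x v = Psi alpha psi x v) ->
  (forall p q x v, (p < 3)%nat -> in_dom alpha v ->
     derivable_pt_lim (fun y => DP p q y v) x (DP (S p) q x v)) ->
  (forall p q x v, (p <= 3)%nat -> in_dom alpha v ->
     derivable_pt_lim (fun w => DP p q x w) v (DP p (S q) x v)) ->
  (forall p q x v, (p <= 3)%nat -> in_dom alpha v -> cont_dom alpha (DP p q) x v) ->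
  (forall p q a b, (p <= 3)%nat -> 1 / alpha < a -> a <= b -> b < 1 ->
     exists K, forall x v, a <= v <= b -> (3 + Rabs x) ^ 2 * Rabs (DP p q x v) <= K) ->
  (forall eta, 0 < eta -> exists C, 0 < C /\ forall j k : Z,
     Rabs (eps j k) <= C * Rpower (3 + Rabs (IZR j)) (1 / alpha + eta)
                         * Rpower (3 + Rabs (IZR k)) (1 / alpha + eta)) ->
  exists F, is_C3_jet alpha F /\
    (forall u v, in_dom alpha v -> F 0%nat 0%nat u v = Xdot alpha psi eps u v) /\
    (forall M a b, dom_box alpha M a b -> exists B, jet_bounded F M a b B).
Proof.
  intros Halpha HP0 HPu HPv HPc HPdecay Heps.
  assert (Hinv : 0 < 1 / alpha < 1).
  { split; [apply Rdiv_lt_0_compat; lra|]. apply (Rmult_lt_reg_r alpha); [lra|].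
    unfold Rdiv. rewrite Rmult_assoc, Rinv_l; lra. }
  destruct (Heps ((1 - 1 / alpha) / 2)) as [C [HC HepsC]]; [lra|].
  set (beta := 1 / alpha + (1 - 1 / alpha) / 2) in HepsC.
  assert (Hbeta : 0 <= beta < 1) by (unfold beta; lra).
  assert (Hdom := Xdot_jets_dominated alpha DP eps HPu HPdecay C beta ltac:(lra) Hbeta HepsC).
  exists (double_Series_jet (Xdot_jets DP eps)). split; [|split].
  - apply double_Series_jet_C3; auto. apply Xdot_jets_C3; auto.
  - intros u v Hv. symmetry.
    apply (Xdot_eq_double_Series_jet alpha DP eps HPu HPdecay C beta); auto; lra.
  - intros M a b Hbox. apply (double_Series_jet_bounded alpha); auto.
Qed.

Theorem mainTheorem5
  (alpha : R) (Halpha : 1 < alpha < 2)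
  (psi : R -> R)
  (Hpsi_C3 : exists d1 d2 d3 : R -> R,
      (forall s, derivable_pt_lim psi s (d1 s)) /\
      (forall s, derivable_pt_lim d1 s (d2 s)) /\
      (forall s, derivable_pt_lim d2 s (d3 s)) /\
      continuity d3)
  (Hpsi_supp : exists L, 0 < L /\ forall s, L < Rabs s -> psi s = 0)
  (HPsi : exists DPsi : nat -> nat -> R -> R -> R,
      (forall x v, in_dom alpha v -> DPsi 0%nat 0%nat x v = Psi alpha psi x v) /\
      (forall p q x v, (p < 3)%nat -> in_dom alpha v ->
          derivable_pt_lim (fun y => DPsi p q y v) x (DPsi (S p) q x v)) /\
      (forall p q x v, (p <= 3)%nat -> in_dom alpha v ->
          derivable_pt_lim (fun w => DPsi p q x w) v (DPsi p (S q) x v)) /\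
      (forall p q x v, (p <= 3)%nat -> in_dom alpha v -> cont_dom alpha (DPsi p q) x v) /\
      (forall p q a b, (p <= 3)%nat -> 1 / alpha < a -> a <= b -> b < 1 ->
          exists K, forall x v, a <= v <= b ->
            (3 + Rabs x) ^ 2 * Rabs (DPsi p q x v) <= K))
  (eps : Z -> Z -> R)
  (Heps : forall eta, 0 < eta -> exists C, 0 < C /\ forall j k : Z,
      Rabs (eps j k) <=
        C * Rpower (3 + Rabs (IZR j)) (1 / alpha + eta)
          * Rpower (3 + Rabs (IZR k)) (1 / alpha + eta)) :
  C3_dom alpha (Xdot alpha psi eps) /\
  (forall M a b, 0 < M -> 1 / alpha < a -> a < b -> b < 1 ->
     exists K, forall u1 u2 v1 v2,
       -M <= u1 <= M -> -M <= u2 <= M -> a <= v1 <= b -> a <= v2 <= b ->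
       qdiv (Rabs (Xdot alpha psi eps u1 v1 - Xdot alpha psi eps u2 v2))
            (Rabs (u1 - u2) + Rabs (v1 - v2)) <= K) /\
  (forall M a b, 0 < M -> 1 / alpha < a -> a < b -> b < 1 ->
     exists K, forall u1 u2 v,
       -M <= u1 <= M -> -M <= u2 <= M -> a <= v <= b ->
       qdiv (Rabs (Xdot alpha psi eps u1 v - Xdot alpha psi eps u2 v))
            (Rabs (u1 - u2)) <= K).
Proof.
  (* The hypotheses on [psi] only serve to establish [HPsi], which is assumed. *)
  destruct HPsi as [DP [HP0 [HPu [HPv [HPc HPdecay]]]]].
  destruct (Xdot_jet_representation alpha psi eps DP ltac:(lra) HP0 HPu HPv HPc HPdecay Heps)
    as [F [HF [HFX HFB]]].
  assert (Hlip := jet_qdiv_bounded alpha F _ HF HFX HFB).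
  split; [exists F; split; [exact HFX | exact HF] | split; [exact Hlip|]].
  intros M a b HM Ha Hab Hb. destruct (Hlip M a b HM Ha Hab Hb) as [K HK].
  exists K. intros u1 u2 v Hu1 Hu2 Hv.
  rewrite <- (Rplus_0_r (Rabs (u1 - u2))), <- Rabs_R0, <- (Rminus_eq_0 v). auto.
Qed.
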